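(* If $G$ is a hypo-unique domination graph, then $b(G)\leq \delta(G)+1$.
   Context: All graphs are finite, simple and undirected. A set $D\subseteq V(G)$ is dominating if every vertex of $G$ not in $D$ has a neighbor in $D$; $\gamma(G)$ is the minimum size of a dominating set, and a dominating set of size $\gamma(G)$ is a $\gamma$-set. $G$ is a hypo-unique domination graph if $G$ has at least two $\gamma$-sets but for every $v\in V(G)$ the graph $G-v$ has exactly one $\gamma$-set. The bondage number $b(G)$ of a graph with at least one edge is the minimum number of edges whose removal from $G$ yields a graph with domination number larger than $\gamma(G)$. $\delta(G)$ is the minimum degree. *)

From mathcomp Require Import all_boot.
Set Implicit Arguments. Unset Strict Implicit. Unset Printing Implicit Defensive.

(* A finite simple graph is given by a vertex set V : {set T} over a finType T
   and an adjacency relation e, assumed symmetric and irreflexive; only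
   adjacencies between vertices of V matter. *)
Definition simple_graph (T : finType) (e : rel T) : Prop :=
  symmetric e /\ irreflexive e.

Section Dom.
Variable T : finType.

Definition dominating (V : {set T}) (e : rel T) (D : {set T}) : bool :=
  (D \subset V) && [forall x in V, (x \in D) || [exists y in D, e x y]].

(* domination number: least size of a dominating set (V itself dominates) *)
Definition gamma (V : {set T}) (e : rel T) : nat :=
  \big[minn/#|V|]_(D : {set T} | dominating V e D) #|D|.

Definition gamma_set (V : {set T}) (e : rel T) (D : {set T}) : bool :=
  dominating V e D && (#|D| == gamma V e).

Definition num_gamma_sets (V : {set T}) (e : rel T) : nat :=
  #|[set D : {set T} | gamma_set V e D]|.

Definition hypo_unique (V : {set T}) (e : rel T) : Prop :=
  2 <= num_gamma_sets V e /\ forall v, v \in V -> num_gamma_sets (V :\ v) e = 1.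

Definition is_edge (V : {set T}) (e : rel T) (s : {set T}) : bool :=
  [exists x in V, exists y in V, e x y && (s == [set x; y])].

Definition edge_set (V : {set T}) (e : rel T) (F : {set {set T}}) : bool :=
  [forall s in F, is_edge V e s].

Definition remove_edges (e : rel T) (F : {set {set T}}) : rel T :=
  fun x y => e x y && ([set x; y] \notin F).

(* bondage number: least number of edges whose removal increases gamma
   (default #|V|^2 when no such set exists; irrelevant when G has an edge
   whose total removal increases gamma) *)
Definition bondage (V : {set T}) (e : rel T) : nat :=
  \big[minn/(#|V| ^ 2)]_(F : {set {set T}} |
      edge_set V e F && (gamma V e < gamma V (remove_edges e F))) #|F|.

Definition degree (V : {set T}) (e : rel T) (v : T) : nat :=
  #|[set u in V | e v u]|.

Definition min_degree (V : {set T}) (e : rel T) : nat :=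
  \big[minn/#|V|]_(v in V) degree V e v.
End Dom.

From mathcomp Require Import all_boot.
Set Implicit Arguments. Unset Strict Implicit. Unset Printing Implicit Defensive.

(* Fix a vertex v and let D0 be the unique gamma-set of G - v; then v |: D0
   dominates G, so gamma(G) <= |D0| + 1.  Removing the edges at v isolates v,
   so every dominating set of the new graph is v together with a dominating
   set of G - v.  If D0 is all of V - v, this already gives more than gamma(G)
   vertices, since gamma(G) < |V| when G has two gamma-sets.  Otherwise some
   x in D0 has a neighbour z other than v; uniqueness of D0 forbids the swap of x
   for z, so x has a private neighbour y, and removing the edge xy as well
   leaves v |: D0 -- the only candidate of size |D0| + 1 -- not dominating. *)

Lemma bigmin_leq_seq (I : eqType) (s : seq I) x (P : pred I) (F : I -> nat) j :
  j \in s -> P j -> \big[minn/x]_(i <- s | P i) F i <= F j.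
Proof.
elim: s => [//|a s IHs]; rewrite inE big_cons => /predU1P [<- -> | s_j Pj].
  exact: geq_minl.
case: (P a); last exact: IHs.
exact: leq_trans (geq_minr _ _) (IHs s_j Pj).
Qed.

Lemma bigmin_leq (I : finType) x (P : pred I) (F : I -> nat) j :
  P j -> \big[minn/x]_(i | P i) F i <= F j.
Proof. by apply: bigmin_leq_seq; rewrite mem_index_enum. Qed.

Section Domination.
Variable T : finType.
Implicit Types (V W D : {set T}) (e : rel T) (F : {set {set T}}).

Lemma dominating_self V e : dominating V e V.
Proof. by rewrite /dominating subxx; apply/forall_inP => x ->. Qed.

Lemma gamma_leq V e D : dominating V e D -> gamma V e <= #|D|.
Proof. exact: bigmin_leq. Qed.

Lemma leq_gamma V e n :
  (forall D, dominating V e D -> n <= #|D|) -> n <= gamma V e.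
Proof.
move=> n_le; apply: (big_ind (fun m => n <= m)) => //.
- exact: n_le (dominating_self V e).
- by move=> a b n_le_a n_le_b; rewrite leq_min n_le_a n_le_b.
Qed.

Lemma bondage_leq V e F :
  edge_set V e F -> gamma V e < gamma V (remove_edges e F) -> bondage V e <= #|F|.
Proof. by move=> F_edges gamma_lt; apply: bigmin_leq; rewrite /= F_edges. Qed.

Lemma gamma_ltn_card V e : 2 <= num_gamma_sets V e -> gamma V e < #|V|.
Proof.
move=> two_sets; rewrite ltn_neqAle gamma_leq ?dominating_self // andbT.
apply/eqP => gamma_V; move: two_sets; apply/negP; rewrite -ltnNge ltnS.
rewrite /num_gamma_sets -(cards1 V); apply/subset_leq_card/subsetP => D.
rewrite !inE => /andP [/andP [DV _] /eqP cardD].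
by rewrite eqEcard DV cardD gamma_V /=.
Qed.

Lemma unique_gamma_set V e :
  num_gamma_sets V e = 1 ->
  exists D0, [/\ dominating V e D0, #|D0| = gamma V e &
    forall D, dominating V e D -> #|D| <= #|D0| -> D = D0].
Proof.
rewrite /num_gamma_sets => /eqP/cards1P [D0 gamma_sets].
have : D0 \in [set D | gamma_set V e D] by rewrite gamma_sets set11.
rewrite inE => /andP [dom_D0 /eqP card_D0].
exists D0; split => // D dom_D le_D.
have : D \in [set D | gamma_set V e D].
  by rewrite inE /gamma_set dom_D eqn_leq gamma_leq // andbT -card_D0.
by rewrite gamma_sets inE => /eqP.
Qed.

Lemma dominating_setU1 V e v D :
  v \in V -> dominating (V :\ v) e D -> dominating V e (v |: D).
Proof.
move=> Vv /andP [DV /forall_inP dom_D]; apply/andP; split.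
  by apply/subsetP => x /setU1P [-> // | /(subsetP DV)/setD1P []].
apply/forall_inP => x Vx; have [-> | x_neq_v] := eqVneq x v; first by rewrite setU11.
have := dom_D x; rewrite in_setD1 x_neq_v Vx => /(_ isT).
case/orP => [Dx | /exists_inP [y Dy exy]]; first by rewrite setU1r.
by apply/orP; right; apply/exists_inP; exists y; rewrite ?setU1r.
Qed.

Lemma dominating_swap W e D0 x z :
  symmetric e -> dominating W e D0 -> z \in W -> e x z ->
  (forall y, y \in W -> y \notin D0 -> e x y -> exists2 w, w \in D0 :\ x & e y w) ->
  dominating W e (z |: (D0 :\ x)).
Proof.
move=> e_sym /andP [D0W /forall_inP dom_D0] Wz exz no_private.
apply/andP; split.
  by apply/subsetP => w /setU1P [-> // | /setD1P [_ /(subsetP D0W)]].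
apply/forall_inP => u Wu; have [-> | u_neq_x] := eqVneq u x.
  by apply/orP; right; apply/exists_inP; exists z; rewrite ?setU11.
have [D0u | D0Nu] := boolP (u \in D0); first by rewrite setU1r // in_setD1 u_neq_x.
have /orP [D0u | /exists_inP [w D0w euw]] := dom_D0 u Wu; first by rewrite D0u in D0Nu.
apply/orP; right; apply/exists_inP.
have [w_eq_x | w_neq_x] := eqVneq w x.
  rewrite w_eq_x e_sym in euw.
  by have [w' D0w' euw'] := no_private u Wu D0Nu euw; exists w'; rewrite ?setU1r.
by exists w; rewrite // setU1r // in_setD1 w_neq_x.
Qed.

Lemma private_neighbor W e D0 x z :
  simple_graph e -> dominating W e D0 ->
  (forall D, dominating W e D -> #|D| <= #|D0| -> D = D0) ->
  x \in D0 -> z \in W -> e x z ->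
  exists2 y, [&& y \in W, y \notin D0 & e x y] & forall w, w \in D0 -> e y w -> w = x.
Proof.
move=> [e_sym e_irr] dom_D0 D0_unique D0x Wz exz.
case: (pickP [pred y | [&& y \in W, y \notin D0, e x y &
                         [forall w in D0, e y w ==> (w == x)]]]).
  move=> y /and4P [Wy D0Ny exy /forall_inP y_private].
  by exists y; rewrite ?Wy ?D0Ny // => w /y_private /implyP eyw /eyw /eqP.
move=> none; have z_neq_x : z != x by apply: contraTneq exz => ->; rewrite e_irr.
have dom_swap : dominating W e (z |: (D0 :\ x)).
  apply: dominating_swap => // y Wy D0Ny exy.
  have /negbT := none y; rewrite /= Wy D0Ny exy negb_forall_in.
  by case/exists_inP => w D0w; rewrite negb_imply => /andP [eyw w_neq_x]; exists w;
    rewrite // in_setD1 w_neq_x.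
have card_swap : #|z |: (D0 :\ x)| <= #|D0|.
  by rewrite cardsU1 (cardsD1 x D0) D0x add1n addnC -addn1 leq_add2l leq_b1.
have := D0_unique _ dom_swap card_swap; move/setP/(_ x).
by rewrite !inE eq_sym (negbTE z_neq_x) eqxx D0x.
Qed.

Definition edges_at V e v : {set {set T}} :=
  [set [set v; u] | u in [set u in V | e v u]].

Lemma mem_edges_at V e v u : u \in V -> e v u -> [set v; u] \in edges_at V e v.
Proof. by move=> Vu evu; apply/imsetP; exists u; rewrite // inE Vu evu. Qed.

Lemma card_edges_at V e v : #|edges_at V e v| <= degree V e v.
Proof. exact: leq_imset_card. Qed.

Lemma edge_set_edges_at V e v : v \in V -> edge_set V e (edges_at V e v).
Proof.
move=> Vv; apply/forall_inP => s /imsetP [u]; rewrite inE => /andP [Vu evu] ->.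
by apply/exists_inP; exists v => //; apply/exists_inP; exists u; rewrite // evu eqxx.
Qed.

Lemma dominating_remove_edges_at V e F v D :
  symmetric e -> v \in V -> edges_at V e v \subset F ->
  dominating V (remove_edges e F) D -> v \in D /\ dominating (V :\ v) e (D :\ v).
Proof.
move=> e_sym Vv /subsetP sub_F /andP [DV /forall_inP dom_D].
have edge_v_removed u : u \in V -> e v u -> [set v; u] \in F.
  by move=> Vu evu; apply/sub_F/mem_edges_at.
have Dv : v \in D.
  have /orP [// | /exists_inP [u Du /andP [evu]]] := dom_D v Vv.
  by rewrite edge_v_removed ?(subsetP DV).
split => //; apply/andP; split; first exact: setSD.
apply/forall_inP => u /setD1P [u_neq_v Vu].
have /orP [Du | /exists_inP [w Dw /andP [euw removed]]] := dom_D u Vu.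
  by rewrite in_setD1 u_neq_v Du.
apply/orP; right; apply/exists_inP; exists w => //.
rewrite in_setD1 Dw andbT; apply: contraNneq removed => w_eq_v.
by rewrite w_eq_v setUC edge_v_removed // e_sym -w_eq_v.
Qed.

Lemma bondage_leq_degree V e v :
  symmetric e -> v \in V -> gamma V e <= gamma (V :\ v) e ->
  bondage V e <= degree V e v.
Proof.
move=> e_sym Vv gamma_le.
apply: leq_trans (bondage_leq (edge_set_edges_at e Vv) _) (card_edges_at V e v).
apply: leq_gamma => D /(dominating_remove_edges_at e_sym Vv (subxx _)) [Dv dom_Dv].
by rewrite (cardsD1 v D) Dv add1n ltnS (leq_trans gamma_le) ?gamma_leq.
Qed.

Lemma bondage_leq_degreeS V e v D0 x y :
  symmetric e -> v \in V -> dominating (V :\ v) e D0 ->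
  (forall D, dominating (V :\ v) e D -> #|D| <= #|D0| -> D = D0) ->
  x \in D0 -> [&& y \in V :\ v, y \notin D0 & e x y] ->
  (forall w, w \in D0 -> e y w -> w = x) ->
  bondage V e <= degree V e v + 1.
Proof.
move=> e_sym Vv dom_D0 D0_unique D0x /and3P [/setD1P [y_neq_v Vy] D0Ny exy] y_private.
have x_in_V : x \in V by case/andP: dom_D0 => /subsetP /(_ x D0x) /setD1P [].
set F := [set x; y] |: edges_at V e v.
have F_edges : edge_set V e F.
  apply/forall_inP => s /setU1P [-> | /(forall_inP (edge_set_edges_at e Vv)) //].
  by apply/exists_inP; exists x => //; apply/exists_inP; exists y; rewrite // exy eqxx.
have card_F : #|F| <= degree V e v + 1.
  by rewrite cardsU1 addnC leq_add ?card_edges_at ?leq_b1.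
apply: leq_trans (bondage_leq F_edges _) card_F.
have gamma_le : gamma V e <= #|D0|.+1.
  apply: leq_trans (gamma_leq (dominating_setU1 Vv dom_D0)) _.
  by rewrite cardsU1 -add1n leq_add2r leq_b1.
apply: leq_ltn_trans gamma_le _; apply: leq_gamma => D dom_D.
have [Dv dom_Dv] := dominating_remove_edges_at e_sym Vv (subsetUr _ _) dom_D.
rewrite ltnNge (cardsD1 v D) Dv add1n ltnS; apply/negP => le_D0.
have D_eq : D = v |: D0 by rewrite -(D0_unique _ dom_Dv le_D0) setD1K.
case/andP: dom_D => _ /forall_inP /(_ y Vy).
rewrite D_eq in_setU1 (negbTE y_neq_v) (negbTE D0Ny) /=.
case/exists_inP => w /setU1P [-> | D0w] /andP [eyw].
  by rewrite /F setU1r // setUC mem_edges_at // e_sym.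
by rewrite (y_private w D0w eyw) setUC /F setU11.
Qed.

Lemma hypo_unique_bondage_leq_degree V e v :
  simple_graph e -> hypo_unique V e -> v \in V ->
  bondage V e <= degree V e v + 1.
Proof.
move=> simple_e [two_sets unique_delete] Vv; have e_sym := simple_e.1.
have [D0 [dom_D0 card_D0 D0_unique]] := unique_gamma_set (unique_delete v Vv).
have [/exists_inP [x D0x /exists_inP [z Wz exz]] | isolated] :=
  boolP [exists x in D0, exists z in V :\ v, e x z].
  have [y y_nbr y_private] := private_neighbor simple_e dom_D0 D0_unique D0x Wz exz.
  exact: bondage_leq_degreeS dom_D0 D0_unique D0x y_nbr y_private.
have D0_eq : D0 = V :\ v.
  case/andP: dom_D0 => D0W /forall_inP dom_W; apply/eqP; rewrite eqEsubset D0W.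
  apply/subsetP => u Wu; have /orP [// | /exists_inP [w D0w euw]] := dom_W u Wu.
  by case/negP: isolated; apply/exists_inP; exists w => //; apply/exists_inP; exists u;
    rewrite // e_sym.
apply/leq_trans/leq_addr/bondage_leq_degree => //.
have := gamma_ltn_card two_sets.
by rewrite -card_D0 D0_eq (cardsD1 v V) Vv add1n ltnS.
Qed.

End Domination.

Theorem theorem3p7 (T : finType) (V : {set T}) (e : rel T) :
  simple_graph e -> hypo_unique V e ->
  bondage V e <= min_degree V e + 1.
Proof.
move=> simple_e hypo_e.
have [v Vv] : exists v, v \in V.
  by apply/card_gt0P; apply: leq_ltn_trans (gamma_ltn_card hypo_e.1).
apply: (big_ind (fun m => bondage V e <= m + 1)).
- apply: leq_trans (hypo_unique_bondage_leq_degree simple_e hypo_e Vv) _.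
  by rewrite leq_add2r /degree setIdE subset_leq_card ?subsetIl.
- by move=> a b le_a le_b; rewrite addn_minl leq_min le_a le_b.
- by move=> u Vu; exact: hypo_unique_bondage_leq_degree.
Qed.
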